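(* Let $X$ be a finite-dimensional real vector space, $\phi:X\to\mathbf{R}$ a strictly convex norm, $K\subseteq X$ closed, $0<s<t<\infty$, $1<\lambda<\infty$, and $K_{\lambda,s,t}=\{x:\rho^\phi_K(x)\ge\lambda,\ s\le\delta^\phi_K(x)\le t\}$. Then $\xi^\phi_K$ is single-valued on $K_{\lambda,s,t}$ and $\xi^\phi_K|K_{\lambda,s,t}$ is uniformly continuous.
   Context: A norm $\phi$ is strictly convex if $\phi(a+b)=\phi(a)+\phi(b)$ implies $\phi(b)a=\phi(a)b$. For closed $K$: $\delta^\phi_K(x)=\inf\{\phi(y-x):y\in K\}$; $\xi^\phi_K(x)=K\cap\{w:\phi(x-w)=\delta^\phi_K(x)\}$; $\rho^\phi_K(x)=\sup\bigl(\mathbf{R}\cap\{s':\delta^\phi_K(w+s'(x-w))=s'\delta^\phi_K(x)\}\bigr)$ for any $w\in\xi^\phi_K(x)$ (independent of the choice of $w$). *)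

From HB Require Import structures.
From mathcomp Require Import all_boot all_order all_algebra.
From mathcomp Require Import all_classical all_reals all_analysis.
Set Implicit Arguments. Unset Strict Implicit. Unset Printing Implicit Defensive.
Import Order.TTheory GRing.Theory Num.Theory.
Import numFieldNormedType.Exports.
Local Open Scope classical_set_scope.
Local Open Scope ring_scope.

Definition is_norm (R : realType) (n : nat) (phi : 'rV[R]_n -> R) : Prop :=
  [/\ (forall x, phi x = 0 -> x = 0),
      (forall (c : R) x, phi (c *: x) = `|c| * phi x) &
      (forall x y, phi (x + y) <= phi x + phi y)].

Definition strictly_convex (R : realType) (n : nat) (phi : 'rV[R]_n -> R) : Prop :=
  forall a b, phi (a + b) = phi a + phi b -> phi b *: a = phi a *: b.

Definition delta (R : realType) (n : nat) (phi : 'rV[R]_n -> R)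
  (K : set 'rV[R]_n) (x : 'rV[R]_n) : R :=
  inf [set phi (y - x) | y in K].

Definition xi (R : realType) (n : nat) (phi : 'rV[R]_n -> R)
  (K : set 'rV[R]_n) (x : 'rV[R]_n) : set 'rV[R]_n :=
  K `&` [set w | phi (x - w) = delta phi K x].

Definition rho_at (R : realType) (n : nat) (phi : 'rV[R]_n -> R)
  (K : set 'rV[R]_n) (x w : 'rV[R]_n) : \bar R :=
  ereal_sup [set s'%:E | s' in
    [set s' : R | delta phi K (w + s' *: (x - w)) = s' * delta phi K x]].

(* rho^phi_K(x), computed with some w in xi^phi_K(x) (the paper notes the
   value does not depend on the choice of w). *)
Definition rho (R : realType) (n : nat) (phi : 'rV[R]_n -> R)
  (K : set 'rV[R]_n) (x : 'rV[R]_n) : \bar R :=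
  rho_at phi K x (xget 0 (xi phi K x)).

Definition Klst (R : realType) (n : nat) (phi : 'rV[R]_n -> R)
  (K : set 'rV[R]_n) (lam s t : R) : set 'rV[R]_n :=
  [set x | (lam%:E <= rho phi K x)%E /\ s <= delta phi K x <= t].

(* Let w be a nearest point of K to x and 1 < mu < lam.  Since rho(x) > mu, the
   distance to K grows linearly along the ray from w through x up to
   p = w + mu (x - w), so delta(p) >= mu delta(x).  If w' is a nearest point of K
   to a nearby x', then phi(p - w') >= mu delta(x), where
   p - w' = (mu - 1)(x - w) + (x - w'): the triangle inequality for these two
   vectors is almost an equality.  As the unit sphere is compact, strict
   convexity of phi is uniform, so the directions of x - w and x - w' are close;
   since moreover phi(x - w') is close to delta(x), w' is close to w.  Taking
   x' = x gives uniqueness of the nearest point. *)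

From Pilot Require Import Defs.
From HB Require Import structures.
From mathcomp Require Import all_boot all_order all_algebra.
From mathcomp Require Import all_classical all_reals all_analysis.
From mathcomp Require Import ring lra.
Import Order.TTheory GRing.Theory Num.Theory.
Import numFieldNormedType.Exports.
Local Open Scope classical_set_scope.
Local Open Scope ring_scope.

Lemma mx_entry_le_norm (R : realType) (p q : nat) (A : 'M[R]_(p, q)) i j :
  `|A i j| <= `|A|.
Proof.
have /mapP[k _ ->] : `|A i j| \in [seq `|A k.1 k.2| | k : 'I_p * 'I_q].
  by apply/mapP; exists (i, j); rewrite ?mem_enum.
by rewrite [leRHS]/Num.Def.normr /= mx_normrE; apply/bigmax_geP; right; exists k.
Qed.

Section StrictlyConvexNorm.
Context {R : realType} {n : nat} {phi : 'rV[R]_n -> R}.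
Hypothesis phi_norm : is_norm phi.
Local Notation V := 'rV[R]_n.

Lemma phi_eq0 (x : V) : phi x = 0 -> x = 0.
Proof. by case: phi_norm => phi_eq0 _ _; apply: phi_eq0. Qed.

Lemma phiZ c (x : V) : phi (c *: x) = `|c| * phi x.
Proof. by case: phi_norm. Qed.

Lemma phiD (x y : V) : phi (x + y) <= phi x + phi y.
Proof. by case: phi_norm. Qed.

Lemma phi0 : phi 0 = 0.
Proof. by rewrite -(scale0r (0 : V)) phiZ normr0 mul0r. Qed.

Lemma phiN (x : V) : phi (- x) = phi x.
Proof. by rewrite -scaleN1r phiZ normrN normr1 mul1r. Qed.

Lemma phi_ge0 (x : V) : 0 <= phi x.
Proof.
have := phiD x (- x); rewrite subrr phi0 phiN => h.
by rewrite -(pmulrn_lge0 _ (isT : (0 < 2)%N)) mulr2n.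
Qed.

Lemma phi_distC (x y : V) : phi (x - y) = phi (y - x).
Proof. by rewrite -phiN opprB. Qed.

Lemma phi_dist_dist (x y : V) : `|phi x - phi y| <= phi (x - y).
Proof.
rewrite ler_norml; apply/andP; split.
- by have := phiD (y - x) x; rewrite subrK phi_distC; lra.
- by have := phiD (x - y) y; rewrite subrK; lra.
Qed.

Lemma phi_sum (F : 'I_n -> V) : phi (\sum_i F i) <= \sum_i phi (F i).
Proof.
apply: (big_ind2 (fun a b => phi a <= b)); rewrite ?phi0 //.
by move=> a b c d hab hcd; apply: le_trans (phiD _ _) (lerD hab hcd).
Qed.

Lemma phi_le_norm : exists2 C, 0 < C & forall x : V, phi x <= C * `|x|.
Proof.
exists (\sum_i phi 'e_i + 1).
  by rewrite ltr_wpDl // sumr_ge0 // => i _; apply: phi_ge0.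
move=> x; rewrite {1}(row_sum_delta x); apply: le_trans (phi_sum _) _.
rewrite mulrDl mul1r ler_wpDr // mulr_suml; apply: ler_sum => i _.
by rewrite phiZ mulrC ler_wpM2l ?phi_ge0 // mx_entry_le_norm.
Qed.

Lemma phi_lipschitz_continuous (f : V -> R) :
  (forall a b, `|f a - f b| <= phi (a - b)) -> continuous f.
Proof.
move=> f_lip x; have [C C0 phiC] := phi_le_norm.
apply/(@cvgrPdist_lt _ _ _ (nbhs x) (nbhs_filter x)) => e e0.
apply/(@nbhs_normP R V); exists (e / C); first by rewrite /= divr_gt0.
move=> y /= xy; apply: le_lt_trans (f_lip _ _) _; apply: le_lt_trans (phiC _) _.
by rewrite mulrC -ltr_pdivlMr.
Qed.

Lemma continuous_phi : continuous phi.
Proof. exact: phi_lipschitz_continuous phi_dist_dist. Qed.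

Lemma continuous_phi_dist (x : V) : continuous (fun y : V => phi (y - x)).
Proof.
apply: phi_lipschitz_continuous => a b.
by rewrite (_ : a - b = (a - x) - (b - x)) ?phi_dist_dist // opprB addrA subrK.
Qed.

Lemma norm_le_phi : exists2 c, 0 < c & forall x : V, c * `|x| <= phi x.
Proof.
have [sphere_ne|sphere0] := pselect (exists x : V, `|x| = 1); last first.
  exists 1 => // x; have [->|x0] := eqVneq x 0; first by rewrite normr0 phi0 mulr0.
  by exfalso; apply: sphere0; exists (`|x|^-1 *: x); apply: normfZV.
have sphere_compact : compact [set x : V | `|x| = 1].
  apply: bounded_closed_compact; first by exists 1; split => // M M1 x /= ->; apply: ltW.
  apply: (@closed_comp _ _ (fun x : V => `|x|) [set r : R | r = 1]) => [x _|].
    exact: norm_continuous.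
  exact: closed_eq.
have [x0 /set_mem x0_unit x0_min] :=
  compact_EVT_min sphere_ne sphere_compact (continuous_subspaceT continuous_phi).
have phi_x0_gt0 : 0 < phi x0.
  rewrite lt_def phi_ge0 andbT; apply/eqP => /phi_eq0 x00.
  by move: x0_unit; rewrite x00 normr0 => /eqP; rewrite eq_sym oner_eq0.
exists (phi x0) => // x; have [->|x_neq0] := eqVneq x 0; first by rewrite normr0 mulr0 phi0.
have := x0_min (`|x|^-1 *: x); rewrite inE /= normfZV // => /(_ erefl).
by rewrite phiZ normfV normr_id -ler_pdivlMr ?normr_gt0 // mulrC.
Qed.

Lemma phi_bounded_closed_compact (A : set V) (x0 : V) r :
  closed A -> (forall x, A x -> phi (x - x0) <= r) -> compact A.
Proof.
move=> A_closed A_bounded; apply: bounded_closed_compact => //.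
have [c c0 c_phi] := norm_le_phi.
exists (`|x0| + r / c); split; first exact: num_real.
move=> M rM x /A_bounded x_near; apply/ltW/(le_lt_trans _ rM).
rewrite -(subrK x0 x); apply: le_trans (ler_normD _ _) _.
by rewrite addrC lerD2l ler_pdivlMr // mulrC (le_trans (c_phi _)).
Qed.

Definition phi_dir (a : V) : V := (phi a)^-1 *: a.

Lemma phi_dirK (a : V) : phi a *: phi_dir a = a.
Proof.
have [/phi_eq0 ->|a_neq0] := eqVneq (phi a) 0; first by rewrite phi0 scale0r.
by rewrite scalerA mulfV // scale1r.
Qed.

Lemma phi_dir_le1 (a : V) : phi (phi_dir a) <= 1.
Proof.
rewrite phiZ ger0_norm ?invr_ge0 ?phi_ge0 //.
by have [->|a_neq0] := eqVneq (phi a) 0; rewrite ?mulr0 ?mulVf.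
Qed.

Lemma phi_dir_unit {a : V} : phi a != 0 -> phi (phi_dir a) = 1.
Proof. by move=> a_neq0; rewrite phiZ ger0_norm ?invr_ge0 ?phi_ge0 // mulVf. Qed.

Lemma phi_dist_le_dir (a b : V) :
  phi (a - b) <= `|phi a - phi b| + phi b * phi (phi_dir a - phi_dir b).
Proof.
have -> : a - b = (phi a - phi b) *: phi_dir a + phi b *: (phi_dir a - phi_dir b).
  by rewrite scalerBl scalerBr addrA subrK !phi_dirK.
apply: le_trans (phiD _ _) _.
rewrite phiZ [phi (phi b *: _)]phiZ (ger0_norm (phi_ge0 b)) lerD2r.
exact: ler_piMr (normr_ge0 _) (phi_dir_le1 a).
Qed.

Hypothesis phi_strictly_convex : strictly_convex phi.

Definition convexity_modulus (e k : R) : Prop :=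
  forall u v : V, phi u = 1 -> phi v = 1 -> e <= phi (u - v) -> phi (u + v) <= 2 - k.

Lemma convexity_modulus_exists {e : R} :
  0 < e -> exists2 k : R, 0 < k & convexity_modulus e k.
Proof.
move=> e_gt0; pose S := [set u : V | phi u = 1].
have S_compact : compact S.
  apply: (@phi_bounded_closed_compact _ 0 1); last by move=> u; rewrite subr0 => ->.
  by apply: (closed_comp _ (@closed_eq R 1)) => u _; apply: continuous_phi.
pose P := (S `*` S) `&` [set p | e <= phi (p.1 - p.2)].
have P_compact : compact P.
  apply: compact_closedI; first exact: compact_setX.
  apply: (closed_comp _ (@closed_ge R e)) => p _.
  by apply: continuous_comp; [apply: sub_continuous | apply: continuous_phi].
have [P_ne|P0] := pselect (P !=set0); last first.
  by exists 1 => // u v u1 v1 uv; exfalso; apply: P0; exists (u, v).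
have sum_continuous : continuous (fun p : V * V => phi (p.1 + p.2)).
  by move=> p; apply: continuous_comp; [apply: add_continuous | apply: continuous_phi].
have [[u0 v0] /set_mem[[/= u01 v01] /= uv0] max0] :=
  compact_EVT_max P_ne P_compact (continuous_subspaceT sum_continuous).
(* The maximum of phi(u + v) over the compact set P is < 2 by strict convexity. *)
exists (2 - phi (u0 + v0)); last first.
  by move=> u v u1 v1 uv; rewrite subKr; apply: (max0 (u, v)); rewrite inE.
rewrite subr_gt0 lt_def -{2}[2]/(1 + 1) -{2}u01 -{2}v01 phiD andbT.
apply/eqP => sum_eq2; have u0_eq_v0 : u0 = v0.
  by have := phi_strictly_convex u0 v0; rewrite u01 v01 !scale1r; apply; rewrite -sum_eq2.
by move: uv0; rewrite u0_eq_v0 subrr phi0; lra.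
Qed.

Lemma convexity_modulus_combination {e k a b : R} {u v : V} :
  convexity_modulus e k -> phi u = 1 -> phi v = 1 -> 0 < a -> a <= b ->
  e <= phi (u - v) -> phi (a *: u + b *: v) <= a + b - k * a.
Proof.
move=> k_mod u1 v1 a_gt0 a_le_b uv.
have -> : a *: u + b *: v = a *: (u + v) + (b - a) *: v.
  by rewrite scalerDr scalerBl addrACA subrr addr0.
apply: le_trans (phiD _ _) _; rewrite !phiZ v1 (gtr0_norm a_gt0) ger0_norm ?subr_ge0 //.
have : a * phi (u + v) <= a * (2 - k) by rewrite ler_pM2l // k_mod.
lra.
Qed.

Variable K : set V.
Local Notation delta := (delta phi K).
Local Notation nearest x := (xget 0 (xi phi K x)).

Lemma delta_le (x y : V) : K y -> delta x <= phi (y - x).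
Proof.
move=> Ky; apply: ge_inf; last by exists y.
by exists 0 => _ [z _ <-]; apply: phi_ge0.
Qed.

Lemma delta_lipschitz (y z : V) : K !=set0 -> delta z <= delta y + phi (z - y).
Proof.
move=> [k0 Kk0]; rewrite -lerBlDr; apply: lb_le_inf; first by exists (phi (k0 - y)), k0.
move=> _ [k Kk <-]; rewrite lerBlDr; apply: le_trans (delta_le z k Kk) _.
have -> : k - z = (k - y) + (y - z) by rewrite addrA subrK.
by rewrite (phi_distC z y) phiD.
Qed.

Lemma delta_attained (x : V) : closed K -> K !=set0 ->
  exists2 w, K w & phi (x - w) = delta x.
Proof.
move=> K_closed [k0 Kk0].
have delta_has_inf : has_inf [set phi (y - x) | y in K].
  by split; [exists (phi (k0 - x)), k0 | exists 0 => _ [z _ <-]; apply: phi_ge0].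
have [_ [y Ky <-] y_near] := inf_adherent ltr01 delta_has_inf.
pose D := K `&` [set y | phi (y - x) <= delta x + 1].
have D_compact : compact D.
  apply: (@phi_bounded_closed_compact _ x (delta x + 1)); last by move=> z [].
  apply: closedI => //; apply: (closed_comp _ (@closed_le R (delta x + 1))).
  by move=> z _; apply: continuous_phi_dist.
have D_ne : D !=set0 by exists y; split => //; apply: ltW.
have [w /set_mem [Kw _] w_min] :=
  compact_EVT_min D_ne D_compact (continuous_subspaceT (continuous_phi_dist x)).
exists w => //; apply/eqP; rewrite eq_le phi_distC delta_le // andbT.
apply: lb_le_inf; first by exists (phi (k0 - x)), k0.
move=> _ [z Kz <-]; have [z_near|z_far] := lerP (phi (z - x)) (delta x + 1).
  by apply: w_min; rewrite inE.
apply/ltW/(le_lt_trans _ z_far)/(le_trans _ (ltW y_near)).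
by apply: w_min; rewrite inE; split => //; apply: ltW.
Qed.

Lemma nonempty_of_delta_neq0 (x : V) : delta x != 0 -> K !=set0.
Proof.
apply: contra_neqP => K0; rewrite /Defs.delta -[RHS]inf0; congr inf.
by apply/seteqP; split => // r [y Ky _]; apply: K0; exists y.
Qed.

Lemma xi_nearest (x : V) : closed K -> delta x != 0 -> xi phi K x (nearest x).
Proof.
move=> K_closed /nonempty_of_delta_neq0 K_ne; apply: xgetPex.
by have [w] := delta_attained x K_closed K_ne; exists w.
Qed.

Lemma delta_ray_ge (x w : V) (mu s' : R) : K w -> phi (x - w) = delta x ->
  0 <= mu <= s' -> delta (w + s' *: (x - w)) = s' * delta x ->
  mu * delta x <= delta (w + mu *: (x - w)).
Proof.
move=> Kw xw /andP[mu_ge0 mu_le] ray_s'.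
have := delta_lipschitz (w + mu *: (x - w)) (w + s' *: (x - w)) (ex_intro _ w Kw).
rewrite ray_s' opprD addrACA subrr add0r -scalerBl phiZ ger0_norm ?subr_ge0 // xw.
lra.
Qed.

Lemma delta_ray_ge_of_rho_gt (x : V) (mu : R) : closed K -> delta x != 0 ->
  0 <= mu -> (mu%:E < rho phi K x)%E ->
  mu * delta x <= delta (nearest x + mu *: (x - nearest x)).
Proof.
move=> K_closed delta_neq0 mu_ge0 /ereal_sup_gt[_ [s' ray_s' <-]].
rewrite lte_fin => mu_lt_s'.
have [Kw xw] := xi_nearest x K_closed delta_neq0.
by apply: delta_ray_ge ray_s'; rewrite // mu_ge0 ltW.
Qed.

Lemma delta_le_phi_nearest (x : V) {x' w' : V} : K w' -> phi (x' - w') = delta x' ->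
  delta x <= phi (x - w') <= delta x + 2 * phi (x - x').
Proof.
move=> Kw' x'w'; rewrite phi_distC delta_le //=.
have := delta_lipschitz x x' (ex_intro _ w' Kw'); rewrite (phi_distC x').
have := phiD (x - x') (x' - w'); rewrite addrA subrK (phi_distC w').
lra.
Qed.

Lemma phi_dir_nearest_lt {k e mu : R} {x x' w w' : V} :
  convexity_modulus e k -> 1 < mu <= 2 ->
  K w -> phi (x - w) = delta x -> 0 < delta x ->
  mu * delta x <= delta (w + mu *: (x - w)) ->
  K w' -> phi (x' - w') = delta x' ->
  2 * phi (x - x') < k * ((mu - 1) * delta x) ->
  phi (phi_dir (x - w) - phi_dir (x - w')) < e.
Proof.
move=> k_mod /andP[mu_gt1 mu_le2] Kw xw delta_gt0 ray Kw' x'w' x'_near.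
have /andP[b_ge b_le] := delta_le_phi_nearest x Kw' x'w'.
have a_neq0 : phi (x - w) != 0 by rewrite xw gt_eqF.
have b_neq0 : phi (x - w') != 0 by rewrite gt_eqF // (lt_le_trans delta_gt0).
have pa_gt0 : 0 < (mu - 1) * delta x by rewrite mulr_gt0 // subr_gt0.
have pa_le : (mu - 1) * delta x <= phi (x - w').
  by apply: le_trans b_ge; apply: ler_piMl; [apply: ltW | lra].
(* Otherwise the modulus makes phi(p - w') < mu delta(x) for p = w + mu (x - w). *)
rewrite ltNge; apply/negP => far.
have := convexity_modulus_combination k_mod (phi_dir_unit a_neq0) (phi_dir_unit b_neq0)
  pa_gt0 pa_le far.
have -> : (mu - 1) * delta x *: phi_dir (x - w) = (mu - 1) *: (x - w).
  by rewrite -xw -scalerA phi_dirK.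
have -> : (mu - 1) *: (x - w) + phi (x - w') *: phi_dir (x - w') = w + mu *: (x - w) - w'.
  by rewrite phi_dirK scalerBl scale1r opprB -addrA subrKA addrA (addrC _ w).
have := delta_le (w + mu *: (x - w)) w' Kw'; rewrite phi_distC.
lra.
Qed.

Lemma nearest_point_uniformly_continuous {s t mu e : R} :
  0 < s -> 0 < t -> 1 < mu <= 2 -> 0 < e -> exists2 d : R, 0 < d & forall x x' w w' : V,
    K w -> phi (x - w) = delta x -> s <= delta x <= t ->
    mu * delta x <= delta (w + mu *: (x - w)) ->
    K w' -> phi (x' - w') = delta x' -> phi (x - x') < d -> phi (w - w') < e.
Proof.
move=> s_gt0 t_gt0 mu_range e_gt0; have /andP[mu_gt1 _] := mu_range.
have e'_gt0 : 0 < e / (2 * t) by rewrite divr_gt0 ?mulr_gt0.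
have [k k_gt0 k_mod] := convexity_modulus_exists e'_gt0.
exists (Num.min (k * ((mu - 1) * s) / 2) (e / 4)).
  by rewrite lt_min !divr_gt0 ?mulr_gt0 ?subr_gt0.
move=> x x' w w' Kw xw /andP[s_le t_ge] ray Kw' x'w'.
rewrite lt_min => /andP[near_k near_e].
have delta_gt0 : 0 < delta x by apply: lt_le_trans s_le.
have x'_near : 2 * phi (x - x') < k * ((mu - 1) * delta x).
  apply: (@lt_le_trans _ _ (k * ((mu - 1) * s))); first by lra.
  by rewrite ler_pM2l // ler_pM2l // subr_gt0.
have dir_close := phi_dir_nearest_lt k_mod mu_range Kw xw delta_gt0 ray Kw' x'w' x'_near.
have /andP[b_ge b_le] := delta_le_phi_nearest x Kw' x'w'.
have -> : w - w' = (x - w') - (x - w) by rewrite opprB [RHS]addrC subrKA.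
apply: le_lt_trans (phi_dist_le_dir _ _) _; rewrite xw (phi_distC (phi_dir _)).
have : delta x * phi (phi_dir (x - w) - phi_dir (x - w')) <= t * (e / (2 * t)).
  by apply: ler_pM; rewrite ?phi_ge0 // ltW.
have -> : t * (e / (2 * t)) = e / 2 by field; rewrite gt_eqF.
rewrite ger0_norm ?subr_ge0 //; lra.
Qed.

Lemma nearest_point_unique {mu : R} {x w w' : V} : 1 < mu <= 2 ->
  K w -> phi (x - w) = delta x -> 0 < delta x ->
  mu * delta x <= delta (w + mu *: (x - w)) ->
  K w' -> phi (x - w') = delta x -> w' = w.
Proof.
move=> mu_range Kw xw delta_gt0 ray Kw' xw'.
apply/esym/subr0_eq/phi_eq0/eqP; rewrite eq_le phi_ge0 andbT leNgt; apply/negP => ww'_gt0.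
have [d d_gt0 close] :=
  nearest_point_uniformly_continuous delta_gt0 delta_gt0 mu_range ww'_gt0.
have := close x x w w' Kw xw; rewrite !lexx subrr phi0 ltxx.
by move=> /(_ isT ray Kw' xw' d_gt0).
Qed.

End StrictlyConvexNorm.

Theorem corollary3p3 (R : realType) (n : nat) (phi : 'rV[R]_n -> R)
  (K : set 'rV[R]_n) (s t lam : R) :
  is_norm phi -> strictly_convex phi -> closed K ->
  0 < s -> s < t -> 1 < lam ->
  exists f : 'rV[R]_n -> 'rV[R]_n,
    (forall x, Klst phi K lam s t x -> xi phi K x = [set f x]) /\
    (forall e : R, 0 < e -> exists2 d : R, 0 < d &
       forall x y, Klst phi K lam s t x -> Klst phi K lam s t y ->
         phi (x - y) < d -> phi (f x - f y) < e).
Proof.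
move=> phi_norm phi_sc K_closed s_gt0 s_lt_t lam_gt1.
(* mu <= 2 keeps (mu - 1) delta(x) below phi(x - w'), as the modulus lemma needs. *)
pose mu := (1 + Num.min lam 2) / 2.
have [mu_range mu_lt_lam] : 1 < mu <= 2 /\ mu < lam.
  have m_gt1 : 1 < Num.min lam 2 by rewrite lt_min lam_gt1 ltr1n.
  have m_le : Num.min lam 2 <= lam /\ Num.min lam 2 <= 2 by rewrite !ge_min !lexx orbT.
  by rewrite /mu; split; [apply/andP; split|]; lra.
pose f x := xget 0 (xi phi K x).
have nearest x : Klst phi K lam s t x -> [/\ xi phi K x (f x),
    s <= delta phi K x <= t & mu * delta phi K x <= delta phi K (f x + mu *: (x - f x))].
  move=> [rho_ge s_t]; have /andP[s_le _] := s_t.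
  have delta_neq0 : delta phi K x != 0 by rewrite gt_eqF // (lt_le_trans s_gt0).
  split=> //; first exact: xi_nearest.
  apply: delta_ray_ge_of_rho_gt => //; first by lra.
  by apply: lt_le_trans rho_ge; rewrite lte_fin.
exists f; split.
  move=> x /nearest[[Kfx xfx] /andP[s_le _] ray]; apply/seteqP; split=> [w [Kw xw]|_ ->] //.
  exact: nearest_point_unique mu_range Kfx xfx (lt_le_trans s_gt0 s_le) ray Kw xw.
move=> e e_gt0.
have [d d_gt0 close] := nearest_point_uniformly_continuous phi_norm phi_sc K s_gt0
  (lt_trans s_gt0 s_lt_t) mu_range e_gt0.
exists d => // x y /nearest[[Kfx xfx] x_range ray] /nearest[[Kfy yfy] _ _].
exact: close.
Qed.
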